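(* Let $\kappa\in\mathbb Z[q,q^{-1}]$ satisfy $\overline{\kappa}=\kappa$, write $\kappa=\sum_{i\in\mathbb Z}c_iq^i$, and set $\diamondsuit=\sum_{i\in\mathbb Z}(-1)^ic_{2i}$. Let $t=F+\check E+\kappa K^{-1}$, $B_{\rm ev}=\frac{t^2-\diamondsuit^2}{[2]}$ and $B_{\rm odd}=\frac{t^2-1+\diamondsuit^2}{[2]}$. Then in $\mathbf U$ $$B_{\rm ev}=\check E^{(2)}+q^{-1}\check EF+F^{(2)}+q^{-1}\kappa K^{-1}F+q^{-1}\kappa\check EK^{-1}+\bigl(q+(q^3-q)\kappa^2\bigr)\frac{K^{-2}-1}{q^4-1}+\frac{\kappa^2-\diamondsuit^2}{[2]},$$ $$B_{\rm odd}=\check E^{(2)}+q^{-1}\check EF+F^{(2)}+q^{-1}\kappa K^{-1}F+q^{-1}\kappa\check EK^{-1}+\bigl(q+(q^3-q)\kappa^2\bigr)\frac{K^{-2}-q^2}{q^4-1}+\frac{q^2(\kappa^2-\diamondsuit^2)}{[2]}+q\diamondsuit^2.$$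
   Context: $q$ is an indeterminate, bar is the ring involution of $\mathbb Z[q,q^{-1}]$ with $q\mapsto q^{-1}$, $[n]=\frac{q^n-q^{-n}}{q-q^{-1}}$, $[2]!=[2]$. $\mathbf U$ is the $\mathbb Q(q)$-algebra generated by $E,F,K^{\pm1}$ with relations $KK^{-1}=K^{-1}K=1$, $EF-FE=\frac{K-K^{-1}}{q-q^{-1}}$, $KE=q^2EK$, $KF=q^{-2}FK$; $\check E=q^{-1}EK^{-1}$, $\check E^{(2)}=\check E^2/[2]$, $F^{(2)}=F^2/[2]$. *)

From HB Require Import structures.
From mathcomp Require Import all_boot all_order all_algebra.
Set Implicit Arguments. Unset Strict Implicit. Unset Printing Implicit Defensive.
Import Order.TTheory GRing.Theory Num.Theory.
Local Open Scope ring_scope.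

Definition Qq : fieldType := {fraction {poly rat}}.
Definition qv : Qq := tofrac ('X : {poly rat}).

Definition qnum (n : nat) : Qq := (qv ^+ n - qv ^- n) / (qv - qv^-1).

(* A Laurent polynomial kappa in Z[q,q^-1] is given by integer coefficients
   c : int -> int supported in [-M, M]. *)
Definition laurent (M : nat) (c : int -> int) : Qq :=
  \sum_(k < (M + M).+1) (c (k%:Z - M%:Z))%:~R * qv ^ (k%:Z - M%:Z).

Definition laurent_bar (M : nat) (c : int -> int) : Qq :=
  \sum_(k < (M + M).+1) (c (k%:Z - M%:Z))%:~R * qv ^ (- (k%:Z - M%:Z)).

(* diamond = sum_i (-1)^i c_{2i}; terms with |i| > M vanish since c_{2i} = 0 *)
Definition diamond (M : nat) (c : int -> int) : int :=
  \sum_(k < (M + M).+1) (-1) ^+ `|k%:Z - M%:Z|%N * c (2 * (k%:Z - M%:Z)).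

Definition Uq_rel (A : algType Qq) (E F K Ki : A) : Prop :=
  [/\ K * Ki = 1, Ki * K = 1,
      E * F - F * E = (qv - qv^-1)^-1 *: (K - Ki),
      K * E = qv ^+ 2 *: (E * K) &
      K * F = qv ^- 2 *: (F * K)].

From HB Require Import structures.
From mathcomp Require Import all_boot all_order all_algebra.
From mathcomp Require Import ring.
Set Implicit Arguments. Unset Strict Implicit. Unset Printing Implicit Defensive.
Import Order.TTheory GRing.Theory Num.Theory.
Local Open Scope ring_scope.

(* In t^2 the cross terms come in pairs xy + yx.  The q-commutation rules
   F Ě = q^-2 Ě F + (K^-2 - 1)/(q^2 - 1),  F K^-1 = q^-2 K^-1 F  and
   K^-1 Ě = q^-2 Ě K^-1  turn each pair into q^-1 [2] times one ordered
   monomial, whence  t^2 = [2] (common + coef (K^-2 - 1)) + kappa^2.  Dividing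
   by [2] gives both formulas. *)

Lemma sqrrD3 (R : pzRingType) (x y z : R) :
  (x + y + z) ^+ 2 = x ^+ 2 + y ^+ 2 + z ^+ 2 + (x * y + y * x) + (x * z + z * x)
                     + (y * z + z * y).
Proof.
by rewrite !expr2 !(mulrDl, mulrDr) !addrA (ACl (1*5*9*2*4*3*7*6*8)%AC).
Qed.

Lemma addr_anticomm (R : pzRingType) (A : lalgType R) (x y z : A) (a : R) :
  x * y = a *: (y * x) + z -> x * y + y * x = (a + 1) *: (y * x) + z.
Proof. by move->; rewrite scalerDl scale1r addrAC. Qed.

Lemma addr_anticomm0 (R : pzRingType) (A : lalgType R) (x y : A) (a : R) :
  x * y = a *: (y * x) -> x * y + y * x = (a + 1) *: (y * x).
Proof. by move=> xy; rewrite (@addr_anticomm _ _ _ _ 0 a) ?addr0. Qed.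

Lemma qcommute_inv (R : fieldType) (A : algType R) (x y yi : A) (a : R) :
  y * yi = 1 -> yi * y = 1 -> y * x = a *: (x * y) -> x * yi = a *: (yi * x).
Proof.
move=> y_yi yi_y yx.
by rewrite -[x * yi]mul1r -yi_y -mulrA (mulrA y) yx -scalerAl -scalerAr !mulrA
  -mulrA y_yi mulr1.
Qed.

Lemma scaleVr_affine (R : fieldType) (V : lmodType R) (s a : R) (x v : V) :
  s != 0 -> s^-1 *: (s *: x + a *: v) = x + (a / s) *: v.
Proof. by move=> s_neq0; rewrite scalerDr !scalerA mulVf ?scale1r // mulrC. Qed.

Section QuantumSl2.

Variables (R : fieldType) (A : algType R) (q : R) (E F K Ki : A).
Hypotheses (q_neq0 : q != 0) (q4_neq1 : q ^+ 4 != 1).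
Hypotheses (mulKKi : K * Ki = 1) (mulKiK : Ki * K = 1)
  (commEF : E * F - F * E = (q - q^-1)^-1 *: (K - Ki))
  (mulKE : K * E = q ^+ 2 *: (E * K)) (mulKF : K * F = q ^- 2 *: (F * K)).

Fact q4B1_neq0 : q ^+ 4 - 1 != 0. Proof. by rewrite subr_eq0. Qed.

Fact q4B1E : q ^+ 4 - 1 = (q ^+ 2 - 1) * (q ^+ 2 + 1). Proof. by ring. Qed.

Fact q2B1_neq0 : q ^+ 2 - 1 != 0.
Proof. by apply: contraNneq q4B1_neq0; rewrite q4B1E => ->; rewrite mul0r. Qed.

Fact q2D1_neq0 : q ^+ 2 + 1 != 0.
Proof. by apply: contraNneq q4B1_neq0; rewrite q4B1E => ->; rewrite mulr0. Qed.

Definition Echeck : A := q^-1 *: (E * Ki).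

Lemma mulFKi : F * Ki = q ^- 2 *: (Ki * F).
Proof. exact: qcommute_inv mulKF. Qed.

Lemma mulKiF : Ki * F = q ^+ 2 *: (F * Ki).
Proof. by rewrite mulFKi scalerA mulfV ?scale1r // expf_neq0. Qed.

Lemma mulKiE : Ki * E = q ^- 2 *: (E * Ki).
Proof.
by rewrite (qcommute_inv mulKKi mulKiK mulKE) scalerA mulVf ?scale1r // expf_neq0.
Qed.

Lemma mulKiEcheck : Ki * Echeck = q ^- 2 *: (Echeck * Ki).
Proof.
by rewrite /Echeck -scalerAr -scalerAl mulrA mulKiE -scalerAl scalerA mulrC scalerA.
Qed.

Lemma mulFEcheck :
  F * Echeck = q ^- 2 *: (Echeck * F) + (q ^+ 2 - 1)^-1 *: (Ki ^+ 2 - 1).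
Proof.
have FE : F * E = E * F - (q - q^-1)^-1 *: (K - Ki) by rewrite -commEF opprB addrC subrK.
rewrite /Echeck -scalerAr -!scalerAl mulrA FE -(mulrA E) mulKiF -scalerAr scalerA.
rewrite mulrBl -scalerAl mulrBl mulKKi -expr2 !mulrA scalerBr scalerA.
rewrite scalerA -scalerN opprB.
by congr (_ *: _ + _ *: _); field; rewrite ?q2B1_neq0 q_neq0.
Qed.

Definition tkappa (kap : R) : A := F + Echeck + kap *: Ki.

Definition qint2 : R := q + q^-1.

Lemma qint2E : (q ^+ 2 - q ^- 2) / (q - q^-1) = qint2.
Proof. by rewrite /qint2; field; rewrite q_neq0 q2B1_neq0. Qed.

Fact qint2_neq0 : qint2 != 0.
Proof.
have -> : qint2 = (q ^+ 2 + 1) / q by rewrite /qint2; field.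
by rewrite mulf_neq0 ?invr_eq0 ?q2D1_neq0.
Qed.

Definition Bcommon (kap : R) : A :=
  qint2^-1 *: Echeck ^+ 2 + q^-1 *: (Echeck * F) + qint2^-1 *: F ^+ 2
  + (q^-1 * kap) *: (Ki * F) + (q^-1 * kap) *: (Echeck * Ki).

Definition Bcoef (kap : R) : R := (q + (q ^+ 3 - q) * kap ^+ 2) / (q ^+ 4 - 1).

Lemma sqr_tkappa (kap : R) :
  tkappa kap ^+ 2 = qint2 *: (Bcommon kap + Bcoef kap *: (Ki ^+ 2 - 1)) + (kap ^+ 2)%:A.
Proof.
rewrite /tkappa sqrrD3 [(kap *: Ki) ^+ 2]exprZn.
rewrite -![kap *: Ki * _]scalerAl -![_ * (kap *: Ki)]scalerAr -!scalerDr.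
rewrite (addr_anticomm mulFEcheck) (addr_anticomm0 mulFKi).
rewrite [Echeck * Ki + _]addrC (addr_anticomm0 mulKiEcheck) !scalerA.
have coefE : qint2 * Bcoef kap = kap ^+ 2 + (q ^+ 2 - 1)^-1.
  by rewrite /qint2 /Bcoef; field; rewrite q2B1_neq0 q4B1_neq0 q_neq0.
rewrite -[kap ^+ 2 *: Ki ^+ 2](subrK (kap ^+ 2)%:A) -scalerBr.
move: (Ki ^+ 2 - 1) => u.
rewrite /Bcommon !scalerDr !scalerA coefE scalerDl (mulfV qint2_neq0) !scale1r.
rewrite 2![in X in X = _]addrA (ACl (2*5*1*7*8*(3*6)*4)%AC) /=.
rewrite -scalerDl; congr (_ + _ *: _ + _ + _ *: _ + _ *: _ + _ *: _ + _).
all: by rewrite /qint2; field.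
Qed.

Lemma Bev_formula (kap dia : R) :
  qint2^-1 *: (tkappa kap ^+ 2 - (dia ^+ 2)%:A)
  = Bcommon kap + Bcoef kap *: (Ki ^+ 2 - 1) + ((kap ^+ 2 - dia ^+ 2) / qint2)%:A.
Proof. by rewrite sqr_tkappa -addrA -scalerBl scaleVr_affine ?qint2_neq0. Qed.

Lemma Bodd_formula (kap dia : R) :
  qint2^-1 *: (tkappa kap ^+ 2 - 1 + (dia ^+ 2)%:A)
  = Bcommon kap + Bcoef kap *: (Ki ^+ 2 - (q ^+ 2)%:A)
    + (q ^+ 2 * (kap ^+ 2 - dia ^+ 2) / qint2)%:A + (q * dia ^+ 2)%:A.
Proof.
have tE : tkappa kap ^+ 2 - 1 + (dia ^+ 2)%:A
          = qint2 *: (Bcommon kap + Bcoef kap *: (Ki ^+ 2 - 1))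
            + (kap ^+ 2 - 1 + dia ^+ 2)%:A.
  by rewrite sqr_tkappa !scalerDl scaleNr scale1r !addrA.
have Ki2E : Ki ^+ 2 - (q ^+ 2)%:A = Ki ^+ 2 - 1 - (q ^+ 2 - 1)%:A.
  by rewrite scalerBl scale1r opprB addrA subrK.
rewrite tE scaleVr_affine ?qint2_neq0 // Ki2E.
rewrite [_ *: (_ - (q ^+ 2 - 1)%:A)]scalerBr scalerA.
move: (Bcommon kap) (Bcoef kap *: (Ki ^+ 2 - 1)) => B u.
rewrite addrA -scaleNr -!addrA -!scalerDl; congr (_ + (_ + _ *: _)).
by rewrite /qint2 /Bcoef; field; rewrite -expr2 q_neq0 q2D1_neq0 q4B1_neq0.
Qed.

End QuantumSl2.

Lemma qv_neq0 : qv != 0.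
Proof. by rewrite tofrac_eq0 polyX_eq0. Qed.

Lemma qv4_neq1 : qv ^+ 4 != 1.
Proof.
rewrite /qv -tofrac1 -tofracXn tofrac_eq.
by apply/eqP => /(congr1 (fun p : {poly rat} => size p)); rewrite size_polyXn size_poly1.
Qed.

Lemma qnum2E : qnum 2 = qv + qv^-1.
Proof. exact: qint2E qv_neq0 qv4_neq1. Qed.

Theorem propositionA3 (M : nat) (c : int -> int)
  (hc : forall i : int, (M < `|i|)%N -> c i = 0)
  (hbar : laurent_bar M c = laurent M c)
  (A : algType Qq) (E F K Ki : A) (hrel : Uq_rel E F K Ki) :
  let kap : Qq := laurent M c in
  let dia : Qq := (diamond M c)%:~R in
  let Ec : A := qv^-1 *: (E * Ki) in
  let Ec2 : A := (qnum 2)^-1 *: Ec ^+ 2 in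
  let F2 : A := (qnum 2)^-1 *: F ^+ 2 in
  let t : A := F + Ec + kap *: Ki in
  let common : A := Ec2 + qv^-1 *: (Ec * F) + F2 + (qv^-1 * kap) *: (Ki * F)
                    + (qv^-1 * kap) *: (Ec * Ki) in
  let coef : Qq := (qv + (qv ^+ 3 - qv) * kap ^+ 2) / (qv ^+ 4 - 1) in
  (qnum 2)^-1 *: (t ^+ 2 - (dia ^+ 2)%:A)
    = common + coef *: (Ki ^+ 2 - 1) + ((kap ^+ 2 - dia ^+ 2) / qnum 2)%:A
  /\
  (qnum 2)^-1 *: (t ^+ 2 - 1 + (dia ^+ 2)%:A)
    = common + coef *: (Ki ^+ 2 - (qv ^+ 2)%:A)
      + (qv ^+ 2 * (kap ^+ 2 - dia ^+ 2) / qnum 2)%:A + (qv * dia ^+ 2)%:A.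
Proof.
case: hrel => KKi KiK commEF KE KF; rewrite qnum2E.
have Bev := Bev_formula qv_neq0 qv4_neq1 KKi KiK commEF KE KF.
have Bodd := Bodd_formula qv_neq0 qv4_neq1 KKi KiK commEF KE KF.
by split; [apply: Bev | apply: Bodd].
Qed.
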